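(* Let $\mathbb{K}\in\{\mathbb{R},\mathbb{C}\}$, let $X$ be a linear space over $\mathbb{K}$, let $\phi\colon X\times X\to\mathbb{K}$ be biadditive, and let $Z_0=\{z\in X:\phi(z,z)\neq0\}$ be nonempty. Suppose there is a function $f\colon X\to\mathbb{K}$ with $f(x+y)=f(x)f(y)-\phi(x,y)$ for all $x,y\in X$. Then there is an additive functional $F\colon X\to\mathbb{K}$ with $Z_0=X\setminus\ker F$, and $\phi(x,y)\neq 0$ for all $x,y\in Z_0$.
   Context: A map $\phi\colon X\times X\to\mathbb{K}$ is biadditive if it is additive in each variable separately (no homogeneity assumed); $\ker F=\{x\in X:F(x)=0\}$. *)

From HB Require Import structures.
From mathcomp Require Import all_boot all_order all_algebra.
From mathcomp Require Import reals.
From mathcomp.real_closed Require Import complex.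
Set Implicit Arguments. Unset Strict Implicit. Unset Printing Implicit Defensive.
Import GRing.Theory.
Local Open Scope ring_scope.

Definition biadditive (K : fieldType) (X : lmodType K) (phi : X -> X -> K) : Prop :=
  (forall x y z, phi (x + y) z = phi x z + phi y z) /\
  (forall x y z, phi x (y + z) = phi x y + phi x z).

Definition additive_fun (K : fieldType) (X : lmodType K) (F : X -> K) : Prop :=
  forall x y, F (x + y) = F x + F y.

Definition thm11_over (K : fieldType) : Prop :=
  forall (X : lmodType K) (phi : X -> X -> K) (f : X -> K),
    biadditive phi ->
    (exists z : X, phi z z != 0) ->
    (forall x y : X, f (x + y) = f x * f y - phi x y) ->
    exists F : X -> K,
      additive_fun F /\
      (forall z : X, phi z z != 0 <-> F z != 0) /\
      (forall x y : X, phi x x != 0 -> phi y y != 0 -> phi x y != 0).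

From HB Require Import structures.
From mathcomp Require Import all_boot all_order all_algebra.
From mathcomp Require Import reals.
From mathcomp.real_closed Require Import complex.
From mathcomp Require Import ring.
Set Implicit Arguments. Unset Strict Implicit. Unset Printing Implicit Defensive.
Import GRing.Theory.
Local Open Scope ring_scope.

(* Expanding f (x + y + z) in the two ways allowed by associativity gives
   phi x y (f z - 1) = phi y z (f x - 1).  If f z0 = 1 for some z0 with
   phi z0 z0 != 0, this forces f = 1 and then phi z0 z0 = 0; hence f z0 != 1
   and the identity yields the rank-one factorisation
   phi x y * phi z0 z0 = phi x z0 * phi y z0.  The additive functional
   F := phi _ z0 then does the job, over any field and with no use of the
   scalar multiplication. *)

Section ExponentialCocycle.

Variables (K : fieldType) (X : zmodType) (phi : X -> X -> K) (f : X -> K).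
Hypothesis phiDl : forall x y z, phi (x + y) z = phi x z + phi y z.
Hypothesis phiDr : forall x y z, phi x (y + z) = phi x y + phi x z.
Hypothesis fD : forall x y, f (x + y) = f x * f y - phi x y.

Lemma phi_cocycle x y z : phi x y * (f z - 1) = phi y z * (f x - 1).
Proof.
have fA : f (x + y + z) = f (x + (y + z)) by rewrite addrA.
rewrite fD (fD x y) fD (fD y z) phiDl phiDr in fA.
apply/eqP; rewrite -subr_eq0; apply/eqP.
transitivity ((f x * (f y * f z - phi y z) - (phi x y + phi x z)) -
   ((f x * f y - phi x y) * f z - (phi x z + phi y z))); first by ring.
by rewrite -fA subrr.
Qed.

Variable z0 : X.
Hypothesis phi_z0 : phi z0 z0 != 0.

Lemma f_z0_neq1 : f z0 - 1 != 0.
Proof.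
apply/negP => /eqP fz0.
have f1 x : f x = 1.
  apply/eqP; rewrite -subr_eq0.
  have := phi_cocycle x z0 z0; rewrite fz0 mulr0 => /esym/eqP.
  by rewrite mulf_eq0 (negbTE phi_z0).
have := fD z0 z0; rewrite !f1 mulr1 => f1D.
move: phi_z0; suff -> : phi z0 z0 = 0 by rewrite eqxx.
by apply: (addrI 1); rewrite addr0 {1}f1D subrK.
Qed.

Lemma phi_factor x y : phi x y * phi z0 z0 = phi x z0 * phi y z0.
Proof.
apply: (mulIf f_z0_neq1).
transitivity (phi z0 z0 * (phi x y * (f z0 - 1))); first by ring.
rewrite phi_cocycle.
transitivity (phi y z0 * (phi z0 z0 * (f x - 1))); first by ring.
by rewrite -phi_cocycle; ring.
Qed.

Lemma phi_diag_neq0 x : (phi x x != 0) = (phi x z0 != 0).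
Proof.
have := congr1 (eq_op^~ 0) (phi_factor x x).
by rewrite /= !mulf_eq0 (negbTE phi_z0) orbF orbb => ->.
Qed.

Lemma phi_neq0 x y : phi x x != 0 -> phi y y != 0 -> phi x y != 0.
Proof.
rewrite !phi_diag_neq0 => hx hy.
by have := mulf_neq0 hx hy; rewrite -phi_factor mulf_eq0 negb_or => /andP[].
Qed.

End ExponentialCocycle.

Lemma thm11_over_field (K : fieldType) : thm11_over K.
Proof.
move=> X phi f [phiDl phiDr] [z0 phi_z0] fD.
exists (phi^~ z0); split; first by move=> x y; rewrite phiDl.
split=> [z | x y]; last exact: (phi_neq0 phiDl phiDr fD phi_z0).
by rewrite (phi_diag_neq0 phiDl phiDr fD phi_z0).
Qed.

Theorem mainTheorem11 (R : realType) : thm11_over R /\ thm11_over R[i].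
Proof. by split; apply: thm11_over_field. Qed.
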